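(* Consider the replace-after-random-time process with failure rate $\lambda>0$ and replacement-time density $f$. If there exist $\epsilon>0$ and $\delta>0$ such that $f(r)<r^{\epsilon}$ for all $0<r<\delta$, then $E[N(t)]<\infty$ for every $t>0$.
   Context: Let $X_1,X_2,\ldots$ be independent random variables, each exponentially distributed with rate $\lambda>0$ (density $\lambda e^{-\lambda x}$ for $x>0$). Let $R$ be a random variable, independent of $X_1,X_2,\ldots$, with an absolutely continuous distribution on $(0,\infty)$ with probability density function $f$. For $t\ge0$ define $N(t)=\max\{n\ge0:\sum_{k=1}^n\min(X_k,R)\le t\}$; $\{N(t)\}$ is called the replace-after-random-time (RaRT) process. *)

From HB Require Import structures.
From mathcomp Require Import all_boot all_order all_algebra.
From mathcomp Require Import all_classical all_reals all_analysis.
Set Implicit Arguments. Unset Strict Implicit. Unset Printing Implicit Defensive.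
Import Order.TTheory GRing.Theory Num.Theory.
Import numFieldTopology.Exports.
Local Open Scope classical_set_scope.
Local Open Scope ring_scope.

Definition mutually_independent {d} {T : measurableType d} {R : realType}
  (P : probability T R) (Y : nat -> T -> R) : Prop :=
  forall (s : seq nat) (B : nat -> set R), uniq s ->
    (forall i, measurable (B i)) ->
    P (\bigcap_(i in [set` s]) (Y i @^-1` B i)) =
    (\prod_(i <- s) P (Y i @^-1` B i))%E.

(* The family (R, X_1, X_2, ...): index 0 is R, index k.+1 is X_{k+1}
   (stored as X k). *)
Definition rart_family {T} {R : realType} (Rv : T -> R) (X : nat -> T -> R)
  : nat -> T -> R := fun i => if i is k.+1 then X k else Rv.

Definition rart_partial_sum {T} {R : realType} (Rv : T -> R)
  (X : nat -> T -> R) (w : T) (n : nat) : R :=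
  \sum_(k < n) Num.min (X k w) (Rv w).

(* N(t) = max {n >= 0 : S_n <= t}, as an extended real (+oo if unbounded) *)
Definition rart_N {T} {R : realType} (Rv : T -> R) (X : nat -> T -> R)
  (t : R) (w : T) : \bar R :=
  ereal_sup [set (n%:R)%:E | n in [set n : nat | rart_partial_sum Rv X w n <= t]].

From HB Require Import structures.
From mathcomp Require Import all_boot all_order all_algebra.
From mathcomp Require Import all_classical all_reals all_analysis.
From mathcomp Require Import measurable_realfun zify.
From mathcomp.algebra_tactics Require Import ring lra.
Import Order.TTheory GRing.Theory Num.Theory.
Import numFieldTopology.Exports.
Local Open Scope classical_set_scope.
Local Open Scope ring_scope.

(* Split the sample space according to the dyadic level of [R]: level [0] is
   [[c, +oo[] and level [j+1] is [[c 2^-(j+1), c 2^-j[]. If [R] lies in level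
   [j] and [a = c 2^-j], every summand [min(X_k, R)] with [X_k >= a] is at
   least [a], so [n < N(t)] with [n >= 2t/a] forces at least half of
   [X_0, ..., X_(n-1)] to be shorter than [a]. By independence this has
   probability at most [2^n (lam a)^(n/2) P(R in level j) <= 2^-n P(R in level j)]
   once [lam c <= 1/16], so level [j] contributes at most
   [P(R in level j) (2t/a + 3)] to [E[N(t)]]. For [c <= delta] the density bound
   gives [P(R in level j+1) <= (c 2^-j)^eps c 2^-(j+1)], so these contributions
   decay geometrically in [j]. *)

Section dyadic_levels.
Context {R : realType}.
Implicit Types (c r : R) (j : nat).

Definition dyadic c j : R := c * 2^-1 ^+ j.

Definition dyadic_level c j : set R :=
  if j is j'.+1 then `[dyadic c j, dyadic c j'[ else `[c, +oo[.

Lemma dyadic_gt0 c j : 0 < c -> 0 < dyadic c j.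
Proof. by move=> c0; rewrite mulr_gt0// exprn_gt0// invr_gt0. Qed.

Lemma dyadic_le c j : 0 < c -> dyadic c j <= c.
Proof.
by move=> c0; rewrite ger_pMr// exprn_ile1 ?invr_ge0 ?invf_le1 ?ler1n.
Qed.

Lemma dyadicS c j : dyadic c j = 2 * dyadic c j.+1.
Proof.
by rewrite /dyadic exprS [RHS]mulrCA; congr (_ * _); rewrite mulrA mulfV ?mul1r.
Qed.

Lemma dyadic_level_ge {c j r} : dyadic_level c j r -> dyadic c j <= r.
Proof.
case: j => [|j] /=; rewrite in_itv /=; last by case/andP.
by rewrite /dyadic expr0 mulr1 andbT.
Qed.

Lemma dyadic_level_exists {c r} : 0 < c -> 0 < r -> exists j, dyadic_level c j r.
Proof.
move=> c0 r0; have [cr|rc] := leP c r; first by exists 0%N; rewrite /= in_itv /= cr.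
have below : exists j, dyadic c j <= r.
  exists (Num.truncn (c / r)).+1.
  rewrite /dyadic exprVn ler_pdivrMr ?exprn_gt0// mulrC -ler_pdivrMr//.
  have /andP[_ /ltW cr_lt] := truncn_itv (ltW (divr_gt0 c0 r0)).
  apply: le_trans cr_lt _.
  by rewrite -natrX ler_nat ltnW// ltn_expl.
case: (ex_minnP below) => -[|j] rj jmin.
  by move: rj; rewrite /dyadic expr0 mulr1 leNgt rc.
exists j.+1; rewrite /= in_itv /= rj /= ltNge.
by apply/negP => /jmin; rewrite ltnn.
Qed.

Lemma measurable_dyadic_level c j : measurable (dyadic_level c j).
Proof. by case: j => [|j]; exact: measurable_itv. Qed.

End dyadic_levels.

Definition rart_threshold {R : realType} (t a : R) : nat :=
  (Num.truncn (2 * t / a)).+1.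

Lemma rart_threshold_mul_le {R : realType} {t a : R} : 0 <= t -> 0 < a ->
  a * ((rart_threshold t a)%:R + 2) <= 2 * t + 3 * a.
Proof.
move=> t0 a0; have tr : (rart_threshold t a)%:R <= 2 * t / a + 1.
  rewrite /rart_threshold -addn1 natrD lerD2r truncn_le.
  by apply: divr_ge0 (ltW a0); rewrite mulr_ge0.
rewrite (_ : 2 * t + 3 * a = a * (2 * t / a + 1 + 2)); last by field; rewrite gt_eqF.
exact (ler_wpM2l (ltW a0) (lerD tr (lexx 2))).
Qed.

Section partial_sums.
Context {T : Type} {R : realType} {Rv : T -> R} {X : nat -> T -> R} {w : T}.
Hypotheses (Rv_ge0 : 0 <= Rv w) (X_ge0 : forall k, 0 <= X k w).

Lemma rart_partial_sum_le {m n} : (m <= n)%N ->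
  rart_partial_sum Rv X w m <= rart_partial_sum Rv X w n.
Proof.
move=> /subnK <-; rewrite /rart_partial_sum addnC big_split_ord lerDl.
by apply: sumr_ge0 => k _; rewrite le_min X_ge0.
Qed.

Lemma count_ge_le_partial_sum n a : 0 <= a -> a <= Rv w ->
  a * #|[set k : 'I_n | a <= X k w]%SET|%:R <= rart_partial_sum Rv X w n.
Proof.
move=> a0 aR; rewrite -sum1_card natr_sum mulr_sumr big_mkcond /=.
apply: ler_sum => k _; case: ifP => [|_]; last by rewrite le_min X_ge0.
by rewrite inE mulr1 le_min => ->.
Qed.

(* Among the first [n] lifetimes at most [t / a] reach [a]; past the
   threshold [2 t / a] that is fewer than half of them. *)
Lemma partial_sum_le_half_small {t a n} : 0 <= t -> 0 < a -> a <= Rv w ->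
  rart_partial_sum Rv X w n <= t -> (rart_threshold t a <= n)%N ->
  (n <= 2 * #|[set k : 'I_n | (X k w < a)%R]%SET|)%N.
Proof.
move=> t0 a0 aR St Mn.
have big_le := le_trans (count_ge_le_partial_sum n a (ltW a0) aR) St.
have big_lt : (2 * #|[set k : 'I_n | (a <= X k w)%R]%SET| < n)%N.
  rewrite -(ltr_nat R) natrM -(ltr_pM2l a0).
  apply: (@le_lt_trans _ _ (2 * t)); first by rewrite mulrCA ler_wpM2l.
  have /andP[_ tr] := truncn_itv (divr_ge0 (mulr_ge0 (ler0n R 2) t0) (ltW a0)).
  rewrite [a * _]mulrC -ltr_pdivrMr//; apply: lt_le_trans tr _.
  by rewrite ler_nat.
have split_n := cardsC [set k : 'I_n | X k w < a]%SET.
rewrite card_ord (_ : ~: _ = [set k : 'I_n | a <= X k w]%SET) in split_n.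
  by lia.
by apply/setP => k; rewrite !inE leNgt.
Qed.
End partial_sums.

Lemma card_set_of (T : finType) : #|{set T}| = (2 ^ #|T|)%N.
Proof.
rewrite -cardsT -card_powerset; apply: eq_card => A.
by rewrite powersetE; apply/idP/idP => // _; apply/subsetP => x; rewrite inE.
Qed.

Section measure_lemmas.
Local Open Scope ereal_scope.
Context {d} {T : measurableType d} {R : realType}.

Lemma prode_le_expr (I : Type) (s : seq I) (f : I -> \bar R) (p : R) :
  (0 <= p)%R -> (forall i, 0 <= f i <= p%:E) ->
  \prod_(i <- s) f i <= (p ^+ size s)%:E.
Proof.
move=> p0 f_bnd; elim: s => [|i s ih]; first by rewrite big_nil expr0.
have /andP[fi0 fip] := f_bnd i.
rewrite big_cons exprS EFinM lee_pmul//.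
by apply: prode_ge0 => k; case/andP: (f_bnd k).
Qed.

Lemma measure_bigcup_seq_le (mu : {measure set T -> \bar R}) {I : eqType}
    (s : seq I) (D : pred I) (F : I -> set T) :
  (forall i, measurable (F i)) ->
  mu (\bigcup_(i in [set i | i \in s /\ D i]) F i) <= \sum_(i <- s | D i) mu (F i).
Proof.
move=> mF; have mU (s' : seq I) :
    measurable (\bigcup_(i in [set i | i \in s' /\ D i]) F i).
  apply: fin_bigcup_measurable => //.
  by apply: sub_finite_set (finite_seq s') => i [].
elim: s => [|i s ih].
  rewrite big_nil (_ : \bigcup_(_ in _) _ = set0) ?measure0//.
  by apply/seteqP; split => // w [? []].
rewrite big_cons; case: ifPn => Di.
  apply: le_trans (leeD (lexx _) ih); apply: le_trans (measureU2 _ _ _) => //.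
  apply: le_measure; rewrite ?inE//; first exact: measurableU.
  move=> w [k [+ Dk] Fkw]; rewrite inE => /orP[/eqP ki|ks]; first by left; rewrite -ki.
  by right; exists k.
apply: le_trans ih; apply: le_measure; rewrite ?inE//.
move=> w [k [+ Dk] Fkw]; rewrite inE => /orP[/eqP ki|ks]; last by exists k.
by move: Dk; rewrite ki (negbTE Di).
Qed.

(* No measurability is needed: the integral of a nonnegative function is the
   supremum of the integrals of the simple functions below it. *)
Lemma ge0_le_integralT (mu : {measure set T -> \bar R}) {f g : T -> \bar R} :
  (forall x, 0 <= f x) -> (forall x, f x <= g x) ->
  \int[mu]_x f x <= \int[mu]_x g x.
Proof.
move=> f0 fg; rewrite !ge0_integralTE// => [|x]; last exact: le_trans (fg x).
apply: ereal_sup_le => _ [h hf <-]; exists h => //= x.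
exact: le_trans (hf x) (fg x).
Qed.

End measure_lemmas.

Lemma nneseries_ge_term {R : realType} (u : (\bar R)^nat) j :
  (forall n, 0 <= u n)%E -> (u j <= \sum_(n <oo) u n)%E.
Proof.
move=> u0; apply: le_trans (nneseries_lim_ge (m := 0%N) j.+1 (fun n _ _ => u0 n)).
by rewrite big_nat_recr//= leeDr// sume_ge0.
Qed.

Section rart_N_bounds.
Context {T : Type} {R : realType} {Rv : T -> R} {X : nat -> T -> R}.

Lemma rart_N_ge0 t w : 0 <= t -> (0 <= rart_N Rv X t w)%E.
Proof.
move=> t0; apply: ereal_sup_ubound; exists 0%N => //=.
by rewrite /rart_partial_sum big_ord0.
Qed.

Lemma rart_N_le_count {t} {E : nat -> set T} {w} :
  (forall m, rart_partial_sum Rv X w m <= t -> forall n, (n < m)%N -> E n w) ->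
  (rart_N Rv X t w <= \sum_(n <oo) (\1_(E n) w)%:E)%E.
Proof.
move=> cover; apply: ge_ereal_sup => _ [m /= Sm <-].
apply: le_trans (nneseries_lim_ge (m := 0%N) m _); last first.
  by move=> n _ _; rewrite lee_fin indicE ler0n.
rewrite (eq_big_nat _ _ (F2 := fun=> 1%E)); last first.
  by move=> n /andP[_ nm]; rewrite indicE mem_set//; exact: cover Sm _ nm.
by rewrite sumEFin sumr_const_nat subn0 lee_fin -mulr_natl mulr1.
Qed.

End rart_N_bounds.

Section series_bounds.
Context {R : realType}.

Lemma geometric_sum_le {K r : R} N : 0 <= K -> 0 < r -> r < 1 ->
  \sum_(0 <= n < N) K * r ^+ n <= K / (1 - r).
Proof.
move=> K0 r0 r1; have r1' : `|r| < 1 by rewrite ger0_norm// ltW.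
by have := geometric_le_lim N K0 r0 r1'; rewrite /series /=.
Qed.

Lemma eseries_geometric_le {K r : R} : 0 <= K -> 0 < r -> r < 1 ->
  (\sum_(n <oo) (K * r ^+ n)%:E <= (K / (1 - r))%:E)%E.
Proof.
move=> K0 r0 r1; apply: lime_le.
  by apply: is_cvg_nneseries => n _ _; rewrite lee_fin mulr_ge0// exprn_ge0// ltW.
by apply: nearW => N; rewrite sumEFin lee_fin geometric_sum_le.
Qed.

Lemma eseries_threshold_geometric_le (b : R) (M : nat) : 0 <= b ->
  (\sum_(n <oo) (b * ((n < M)%N%:R + 2^-1 ^+ n))%:E <= (b * (M%:R + 2))%:E)%E.
Proof.
move=> b0; apply: lime_le.
  by apply: is_cvg_nneseries => n _ _; rewrite lee_fin mulr_ge0// addr_ge0// exprn_ge0.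
apply: nearW => N; rewrite sumEFin lee_fin -mulr_sumr ler_wpM2l// big_split lerD//.
  rewrite -natr_sum ler_nat (@leq_trans (minn N M))// ?geq_minr//.
  elim: N => [|N ih]; first by rewrite big_geq.
  by rewrite big_nat_recr//=; case: ltnP => NM; lia.
rewrite [leRHS](_ : _ = 1 / (1 - 2^-1)); last by field.
under eq_bigr do rewrite -[_ ^+ _]mul1r.
by apply: geometric_sum_le; rewrite ?invr_gt0 ?invf_lt1 ?ltr1n.
Qed.

End series_bounds.

Definition rart_coords {n : nat} (A : {set 'I_n}) : seq nat :=
  0%N :: [seq (val k).+1 | k <- enum A].

Definition level_window {R : realType} (c : R) j (i : nat) : set R :=
  if i is 0 then dyadic_level c j else `[0, dyadic c j[.

Lemma measurable_level_window {R : realType} (c : R) j i :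
  measurable (level_window c j i).
Proof. by case: i => [|i]; [exact: measurable_dyadic_level|exact: measurable_itv]. Qed.

Section level_events.
Context {T : Type} {R : realType} (Rv : T -> R) (X : nat -> T -> R).

Definition short_lifetimes (c : R) j {n} (A : {set 'I_n}) : set T :=
  \bigcap_(i in [set` rart_coords A]) rart_family Rv X i @^-1` level_window c j i.

(* Contains [n < N(t)] intersected with [R \in dyadic_level c j]: below the
   threshold only the condition on [R] is kept, beyond it at least half of
   [X_0, ..., X_(n-1)] are shorter than [dyadic c j]. *)
Definition level_event (t c : R) j n : set T :=
  if (n < rart_threshold t (dyadic c j))%N then Rv @^-1` dyadic_level c j
  else \bigcup_(A in [set A : {set 'I_n} | (n <= 2 * #|A|)%N])
         short_lifetimes c j A.

Lemma level_event_cover t c w : 0 < c -> 0 <= t ->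
  0 < Rv w -> (forall k, 0 <= X k w) ->
  exists j, forall m, rart_partial_sum Rv X w m <= t ->
    forall n, (n < m)%N -> level_event t c j n w.
Proof.
move=> c0 t0 Rv0 X0; have [j Rj] := dyadic_level_exists c0 Rv0.
exists j => m Sm n nm; have a0 := dyadic_gt0 c j c0.
rewrite /level_event; case: ltnP => [_|Mn]; first exact: Rj.
have Sn : rart_partial_sum Rv X w n <= t.
  exact: le_trans (rart_partial_sum_le (ltW Rv0) X0 (ltnW nm)) Sm.
exists [set k : 'I_n | X k w < dyadic c j]%SET.
  exact: (partial_sum_le_half_small (ltW Rv0) X0 t0 a0 (dyadic_level_ge Rj) Sn Mn).
move=> i /=; rewrite /rart_coords inE => /orP[/eqP -> //|/mapP[k]].
by rewrite mem_enum inE => Xk ->; rewrite /= in_itv /= X0.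
Qed.

End level_events.

Section level_event_probability.
Local Open Scope ereal_scope.
Context {d} {T : measurableType d} {R : realType} (P : probability T R).
Variables (X : nat -> {mfun T >-> R}) (Rv : {mfun T >-> R}).
Local Notation Xf := (fun k => X k : T -> R).

Lemma measurable_short_lifetimes (c : R) j n (A : {set 'I_n}) :
  measurable (short_lifetimes Rv Xf c j A).
Proof.
apply: fin_bigcap_measurable; first exact: finite_seq.
by move=> [|i] _; apply: measurable_funPTI; exact: measurable_level_window.
Qed.

Lemma measurable_level_event (t c : R) j n :
  measurable (level_event Rv Xf t c j n).
Proof.
rewrite /level_event; case: ifP => _.
  by apply: measurable_funPTI; exact: measurable_dyadic_level.
apply: fin_bigcup_measurable; first exact: finite_finset.
by move=> A _; exact: measurable_short_lifetimes.
Qed.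

Hypothesis indep : mutually_independent P (rart_family Rv Xf).
Context {c : R} {j : nat} {b p : R}.
Hypotheses (b0 : (0 <= b)%R) (p0 : (0 <= p)%R) (p_small : (p <= 16^-1)%R).
Hypothesis PRv : P (Rv @^-1` dyadic_level c j) <= b%:E.
Hypothesis PX : forall k, P (X k @^-1` `[0%R, dyadic c j[) <= p%:E.

Lemma short_lifetimes_prob_le {n} (A : {set 'I_n}) :
  P (short_lifetimes Rv Xf c j A) <= (b * p ^+ #|A|)%:E.
Proof.
rewrite /short_lifetimes indep; last 2 first.
- rewrite /rart_coords /= map_inj_uniq ?enum_uniq ?andbT.
    by apply/mapP => -[].
  by move=> k l [] /val_inj.
- exact: measurable_level_window.
rewrite /rart_coords big_cons big_map EFinM lee_pmul//; first exact: prode_ge0.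
by rewrite cardE; apply: prode_le_expr => // k; rewrite measure_ge0 PX.
Qed.

(* Each of the [2^n] sets [A] with [n <= 2 #|A|] costs at most
   [b (16^-1)^(n/2) = b 4^-n]. *)
Lemma level_event_prob_le t n :
  P (level_event Rv Xf t c j n) <=
  (b * ((n < rart_threshold t (dyadic c j))%N%:R + 2^-1 ^+ n))%:E.
Proof.
rewrite /level_event; case: ifP => small_n.
  by apply: le_trans PRv _; rewrite lee_fin mulrDr mulr1 lerDl mulr_ge0// exprn_ge0.
rewrite (_ : [set A | _] = [set A | A \in index_enum {set 'I_n} /\ (n <= 2 * #|A|)%N]);
  last by apply/seteqP; split => A /=; rewrite mem_index_enum//; case.
apply: le_trans (measure_bigcup_seq_le P _ _ _ (@measurable_short_lifetimes c j n)) _.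
apply: (@le_trans _ _ (\sum_(A : {set 'I_n}) (b * 4^-1 ^+ n)%:E)).
  rewrite big_mkcond /=; apply: lee_sum => A _; case: ifPn => half_A; last first.
    by rewrite lee_fin mulr_ge0// exprn_ge0.
  apply: le_trans (short_lifetimes_prob_le A) _; rewrite lee_fin ler_wpM2l//.
  apply: (@le_trans _ _ (16^-1 ^+ #|A|)%R); first by rewrite lerXn2r// nnegrE.
  rewrite (_ : 16^-1 = 4^-1 ^+ 2)%R; last by rewrite exprVn -natrX.
  by rewrite -exprM ler_wiXn2l// invf_le1// ler1n.
rewrite sumEFin sumr_const card_set_of card_ord lee_fin -mulrnAr ler_wpM2l//= add0r.
rewrite -mulr_natr natrX -exprMn lerXn2r ?nnegrE//.
by rewrite le_eqVlt; apply/orP; left; apply/eqP; field.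
Qed.

Lemma level_event_series_le t (N0 : set T) : measurable N0 -> P N0 = 0 ->
  \sum_(n <oo) P (level_event Rv Xf t c j n `|` N0) <=
  (b * ((rart_threshold t (dyadic c j))%:R + 2))%:E.
Proof.
move=> mN0 PN0; apply: le_trans _ (eseries_threshold_geometric_le _ _ b0).
apply: lee_nneseries => [n _ _ //|n _]; apply: le_trans (level_event_prob_le t n).
apply: le_trans (measureU2 _ _ _) _ => //; first exact: measurable_level_event.
by rewrite [X in _ + X <= _](_ : _ = 0) ?adde0.
Qed.

End level_event_probability.

Section expected_renewals.
Local Open Scope ereal_scope.
Context {d} {T : measurableType d} {R : realType} (P : probability T R).
Context {X : nat -> {mfun T >-> R}} {Rv : {mfun T >-> R}}.
Local Notation Xf := (fun k => X k : T -> R).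
Hypothesis indep : mutually_independent P (rart_family Rv Xf).
Context {N0 : set T} {t c : R} {b p : nat -> R}.
Hypotheses (mN0 : measurable N0) (PN0 : P N0 = 0).
Hypothesis good : forall w, ~ N0 w -> (0 < Rv w)%R /\ forall k, (0 <= X k w)%R.
Hypotheses (t0 : (0 <= t)%R) (c0 : (0 < c)%R).
Hypotheses (b0 : forall j, (0 <= b j)%R) (p0 : forall j, (0 <= p j)%R).
Hypothesis p_small : forall j, (p j <= 16^-1)%R.
Hypothesis PRv : forall j, P (Rv @^-1` dyadic_level c j) <= (b j)%:E.
Hypothesis PX : forall j k, P (X k @^-1` `[0%R, dyadic c j[) <= (p j)%:E.

Let level_count j w :=
  \sum_(n <oo) (\1_(level_event Rv Xf t c j n `|` N0) w : R)%:E.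

Let level_count_ge0 j w : 0 <= level_count j w.
Proof. by apply: nneseries_ge0 => n _ _; rewrite lee_fin indicE ler0n. Qed.

Lemma rart_N_le_level_counts w :
  rart_N Rv Xf t w <= \sum_(j <oo) level_count j w.
Proof.
have [j cover] : exists j, forall m, (rart_partial_sum Rv Xf w m <= t)%R ->
    forall n, (n < m)%N -> (level_event Rv Xf t c j n `|` N0) w.
  have [N0w|/good[Rv0 X0]] := pselect (N0 w); first by exists 0%N => *; right.
  have [j cover] := level_event_cover Rv Xf t c w c0 t0 Rv0 X0.
  by exists j => m Sm n nm; left; exact: cover Sm n nm.
apply: le_trans (rart_N_le_count cover) _.
exact: nneseries_ge_term (level_count_ge0 ^~ w).
Qed.

Lemma integral_rart_N_le : \int[P]_w rart_N Rv Xf t w <=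
  \sum_(j <oo) (b j * ((rart_threshold t (dyadic c j))%:R + 2))%:E.
Proof.
have mE j n : measurable (level_event Rv Xf t c j n `|` N0).
  exact: measurableU (measurable_level_event X Rv t c j n) mN0.
apply: le_trans (ge0_le_integralT P (fun w => rart_N_ge0 t w t0)
  rart_N_le_level_counts) _.
rewrite integral_nneseries//; last first.
  move=> j; apply: ge0_emeasurable_sum => [n w _|n _]; last first.
    exact/measurable_EFinP/measurable_indic.
  by rewrite lee_fin indicE ler0n.
apply: lee_nneseries => [j _ _|j _]; first exact: integral_ge0.
rewrite /level_count integral_nneseries// => [|n]; last first.
  exact/measurable_EFinP/measurable_indic.
apply: le_trans (level_event_series_le P X Rv indep (b0 j) (p0 j) (p_small j)
  (PRv j) (PX j) t N0 mN0 PN0).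
apply: lee_nneseries => [n _ _|n _]; first exact: integral_ge0.
by rewrite integral_indic// setIT.
Qed.

End expected_renewals.

Section distributions.
Local Open Scope ereal_scope.
Context {d} {T : measurableType d} {R : realType} (P : probability T R).

Lemma prob_exponential_lt_le {lam a : R} {Y : {mfun T >-> R}} : (0 < a)%R ->
  (forall B, measurable B -> P (Y @^-1` B) = exponential_prob lam B) ->
  P (Y @^-1` `[0%R, a[) <= (lam * a)%:E.
Proof.
move=> a0 lawY; apply: (@le_trans _ _ (P (Y @^-1` `[0%R, a]))).
  apply: le_measure; rewrite ?inE; try exact: measurable_funPTI.
  by move=> w /=; rewrite !in_itv /= => /andP[-> /ltW ->].
rewrite lawY// exponential_prob_itv0c// lee_fin lerBlDr addrC -lerBlDr.
by have := expR_ge1Dx (- lam * a); rewrite mulNr.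
Qed.

Lemma rart_good_outside_null {lam : R} {X : nat -> {mfun T >-> R}}
    {Rv : {mfun T >-> R}} {f : R -> R} :
  (forall k B, measurable B -> P (X k @^-1` B) = exponential_prob lam B) ->
  (forall B, measurable B ->
     P (Rv @^-1` B) = \int[lebesgue_measure]_(x in B `&` `]0%R, +oo[) (f x)%:E) ->
  exists N0 : set T, [/\ measurable N0, P N0 = 0 &
    forall w, ~ N0 w -> (0 < Rv w)%R /\ forall k, (0 <= X k w)%R].
Proof.
move=> lawX lawR.
have Rv_le0 : P.-negligible (Rv @^-1` `]-oo, 0%R]).
  exists (Rv @^-1` `]-oo, 0%R]); split => //; first exact: measurable_funPTI.
  rewrite lawR// (_ : _ `&` _ = set0) ?integral_set0//.
  apply/seteqP; split => // x []; rewrite /= !in_itv /= andbT.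
  by move=> /le_lt_trans/[apply]; rewrite ltxx.
have X_lt0 k : P.-negligible (X k @^-1` `]-oo, 0%R[).
  exists (X k @^-1` `]-oo, 0%R[); split => //; first exact: measurable_funPTI.
  rewrite lawX// /exponential_prob integral0_eq// => x /=.
  by rewrite in_itv /= => /lt0_exponential_pdf ->.
have [N0 [mN0 PN0 bad]] := negligibleU Rv_le0 (negligible_bigcup X_lt0).
exists N0; split => // w N0w; split.
  by rewrite ltNge; apply/negP => Rw; apply: N0w; apply: bad; left; rewrite /= in_itv.
move=> k; rewrite leNgt; apply/negP => Xw; apply: N0w; apply: bad; right.
by exists k => //=; rewrite in_itv.
Qed.

End distributions.

Definition level_mass {R : realType} (c eps : R) j : R :=
  if j is j'.+1 then dyadic c j' `^ eps * dyadic c j else 1.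

(* Level [j.+1] lies in [(0, delta)], where the density is below
   [(dyadic c j) `^ eps], and it has length [dyadic c j.+1]. *)
Lemma prob_dyadic_level_le {d} {T : measurableType d} {R : realType}
    (P : probability T R) (Rv : {mfun T >-> R}) (f : R -> R) (eps delta c : R) j :
  0 < c -> c <= delta -> 0 <= eps ->
  measurable_fun (`]0, +oo[ : set R) f -> (forall x, 0 < x -> 0 <= f x) ->
  (forall B, measurable B ->
     P (Rv @^-1` B) =
     (\int[lebesgue_measure]_(x in B `&` (`]0%R, +oo[ : set R)) (f x)%:E)%E) ->
  (forall r, 0 < r -> r < delta -> f r < r `^ eps) ->
  (P (Rv @^-1` dyadic_level c j) <= (level_mass c eps j)%:E)%E.
Proof.
move=> c0 c_delta eps0 mf f0 lawR f_small.
case: j => [|j].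
  by apply: probability_le1; apply: measurable_funPTI; exact: measurable_dyadic_level.
have a0 := dyadic_gt0 c j.+1 c0; have a_le := dyadic_le c j c0.
set D := dyadic_level c j.+1 `&` (`]0%R, +oo[ : set R).
have mD : measurable D :=
  measurableI _ _ (measurable_dyadic_level _ _) (measurable_itv _).
rewrite lawR; last exact: measurable_dyadic_level.
apply: (@le_trans _ _ (\int[lebesgue_measure]_(x in D) (dyadic c j `^ eps)%:E)%E).
  apply: ge0_le_integral => //.
  - by move=> x [_]; rewrite /= in_itv /= andbT => x0; rewrite lee_fin f0.
  - by apply/measurable_EFinP; apply: measurable_funS mf => // x [].
  - move=> x [] /=; rewrite !in_itv /= andbT => /andP[_ xa] x0.
    rewrite lee_fin (le_trans (ltW (f_small x x0 _)))//.
      exact: lt_le_trans xa (le_trans a_le c_delta).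
    by rewrite ge0_ler_powR// ?nnegrE ltW// (lt_trans x0 xa).
rewrite integral_cst// EFinM /level_mass lee_wpmul2l ?lee_fin ?powR_ge0//.
apply: (@le_trans _ _ (lebesgue_measure (dyadic_level c j.+1))).
  by apply: le_measure; rewrite ?inE//; [exact: measurable_dyadic_level|exact: subIsetl].
rewrite lebesgue_measure_itv /= lte_fin [dyadic c j]dyadicS ltr_pMl ?ltr1n//=.
by rewrite -EFinD lee_fin; lra.
Qed.

Lemma level_mass_ge0 {R : realType} (c eps : R) j : 0 < c -> 0 <= level_mass c eps j.
Proof. by case: j => [|j] c0 //=; rewrite mulr_ge0 ?powR_ge0// ltW// dyadic_gt0. Qed.

Section level_weights.
Context {R : realType} {t c eps : R}.
Hypotheses (t0 : 0 <= t) (c0 : 0 < c) (eps0 : 0 < eps).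

Lemma level_weights_geometric : exists K r : R, [/\ 0 <= K, 0 < r, r < 1 &
  forall j, level_mass c eps j * ((rart_threshold t (dyadic c j))%:R + 2) <=
    K * r ^+ j].
Proof.
have tc0 : 0 <= 2 * t + 3 * c by rewrite addr_ge0// mulr_ge0// ltW.
have r0 : 0 < 2^-1 `^ eps :> R by rewrite powR_gt0// invr_gt0.
have r1 : 2^-1 `^ eps < 1 :> R.
  have one : 1 `^ eps = 1 :> R by rewrite powR1.
  by rewrite -[ltRHS]one gt0_ltr_powR ?nnegrE ?invr_ge0 ?invf_lt1 ?ltr1n.
exists (((rart_threshold t c)%:R + 2) + c `^ eps * (2 * t + 3 * c) / 2^-1 `^ eps).
have K1_ge0 : 0 <= c `^ eps * (2 * t + 3 * c) / 2^-1 `^ eps.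
  exact: divr_ge0 (mulr_ge0 (powR_ge0 _ _) tc0) (ltW r0).
exists (2^-1 `^ eps); split => //; first by rewrite addr_ge0.
case=> [|j]; first by rewrite /= mul1r expr0 mulr1 /dyadic expr0 mulr1 lerDl.
rewrite /level_mass -mulrA.
apply: (@le_trans _ _ (dyadic c j `^ eps * (2 * t + 3 * c))).
  rewrite ler_wpM2l ?powR_ge0//.
  apply: le_trans (rart_threshold_mul_le t0 (dyadic_gt0 c j.+1 c0)) _.
  by rewrite lerD2l ler_wpM2l// dyadic_le.
rewrite /dyadic (powRM _ (ltW c0)) ?exprn_ge0 ?invr_ge0//.
have -> : (2^-1 ^+ j) `^ eps = (2^-1 `^ eps) ^+ j :> R.
  by rewrite -powR_mulrn ?invr_ge0// -powRrM mulrC powRrM powR_mulrn// powR_ge0.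
apply: (@le_trans _ _ (c `^ eps * (2 * t + 3 * c) / 2^-1 `^ eps * 2^-1 `^ eps ^+ j.+1)).
  rewrite [leRHS](_ : _ = c `^ eps * 2^-1 `^ eps ^+ j * (2 * t + 3 * c))//.
  by rewrite exprS; field; rewrite gt_eqF.
by rewrite ler_wpM2r ?lerDr ?addr_ge0// exprn_ge0// ltW.
Qed.

Lemma level_series_lt_pinfty :
  (\sum_(j <oo) (level_mass c eps j * ((rart_threshold t (dyadic c j))%:R + 2))%:E
    < +oo)%E.
Proof.
have [K [r [K0 r0 r1 weight_le]]] := level_weights_geometric.
apply: le_lt_trans (ltry (K / (1 - r))).
apply: le_trans _ (eseries_geometric_le K0 r0 r1).
apply: lee_nneseries => [j _ _|j _]; last by rewrite lee_fin.
by rewrite lee_fin mulr_ge0 ?level_mass_ge0// addr_ge0.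
Qed.

End level_weights.

Theorem mainTheorem11 (d : measure_display) (T : measurableType d)
  (R : realType) (P : probability T R)
  (lam : R) (X : nat -> {mfun T >-> R}) (Rv : {mfun T >-> R}) (f : R -> R) :
  0 < lam ->
  (forall k (B : set R), measurable B ->
     P (X k @^-1` B) = exponential_prob lam B) ->
  measurable_fun (`]0, +oo[ : set R) f ->
  (forall x, 0 < x -> 0 <= f x) ->
  (forall B : set R, measurable B ->
     P (Rv @^-1` B) =
     (\int[lebesgue_measure]_(x in B `&` (`]0%R, +oo[ : set R)) (f x)%:E)%E) ->
  mutually_independent P (rart_family Rv (fun k => X k)) ->
  (exists eps : R, exists delta : R, 0 < eps /\ 0 < delta /\
     forall r, 0 < r -> r < delta -> f r < r `^ eps) ->
  forall t : R, 0 < t ->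
    (\int[P]_w rart_N Rv (fun k => X k) t w < +oo)%E.
Proof.
move=> lam0 lawX mf f0 lawR indep [eps [delta [eps0 [delta0 f_small]]]] t t0.
have [N0 [mN0 PN0 good]] := rart_good_outside_null P lawX lawR.
pose c := Num.min delta (16 * lam)^-1.
have c0 : 0 < c by rewrite lt_min delta0 invr_gt0 mulr_gt0.
have c_delta : c <= delta by rewrite ge_min lexx.
have c_lam : c <= (16 * lam)^-1 by rewrite ge_min lexx orbT.
have lam_dyadic j : lam * dyadic c j <= 16^-1.
  apply: le_trans (ler_wpM2l (ltW lam0) (le_trans (dyadic_le c j c0) c_lam)) _.
  by rewrite invfM mulrCA mulfV ?gt_eqF// mulr1.
apply: le_lt_trans _ (level_series_lt_pinfty (ltW t0) c0 eps0).
apply: (integral_rart_N_le P indep mN0 PN0 good (ltW t0) c0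
  (b := level_mass c eps) (p := fun j => lam * dyadic c j)) => [j|j|j|j|j k].
- exact: level_mass_ge0.
- by rewrite mulr_ge0 ?ltW// dyadic_gt0.
- exact: lam_dyadic.
- exact: prob_dyadic_level_le c0 c_delta (ltW eps0) mf f0 lawR f_small.
- exact: prob_exponential_lt_le (dyadic_gt0 c j c0) (lawX k).
Qed.
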